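(* Let $\Bbbk$ be a field, $S=\Bbbk[x_1,\dots,x_n]$, $\mathbf{a}\in\mathbb{N}^n$ with all $a_k\ge1$, and $I\subset S$ a monomial ideal all of whose minimal generators $x^{\mathbf{c}}$ satisfy $\mathbf{c}\preceq\mathbf{a}$. For every $i\in[n]$ and every integer $j$ with $1\le j\le a_i+1$, the squarefree monomial ideals $\mathrm{BM}_{\mathbf{a}+\mathbf{e}_i}(I^{\triangleleft\langle i,j\rangle})$ and $\mathrm{Infl}_{(i,j)}(\mathrm{BM}_{\mathbf{a}}(I))$ (each in a polynomial ring with $|\mathbf{a}|+n+1$ variables) coincide after a suitable bijective identification of the variables of the two polynomial rings.
   Context: $\preceq$ is the componentwise order, $|\mathbf{a}|=\sum_k a_k$, $x^{\mathbf{b}}=\prod_k x_k^{b_k}$, $\mathbf{e}_i$ the $i$-th unit vector. For $m\in\mathbb{Z}$, $\tau_{\langle i,m\rangle}$ fixes coordinates $k\neq i$ and sends $b_i$ to $b_i+1$ if $b_i\ge m$, to $b_i$ otherwise. For $j\ge1$ and $I=(x^{\mathbf{c}_1},\dots,x^{\mathbf{c}_r})$, $I^{\triangleleft\langle i,j\rangle}:=(x^{\tau_{\langle i,j\rangle}(\mathbf{c}_1)},\dots,x^{\tau_{\langle i,j\rangle}(\mathbf{c}_r)})$ (its generators have exponents $\preceq\mathbf{a}+\mathbf{e}_i$). Alexander dual: $I^{\vee\mathbf{a}}=(x^{\mathbf{b}}\mid\mathbf{b}\in\mathbb{N}^n,\ \mathbf{b}\preceq\mathbf{a},\ x^{\mathbf{a}-\mathbf{b}}\notin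 I)$. Let $\tilde S=\Bbbk[x_{k,m}\mid 1\le k\le n,\ 1\le m\le a_k+1]$. For a monomial ideal $J$ of $S$ with generators $x^{\mathbf{b}}$, $\mathbf{b}\preceq\mathbf{a}$, let $\mathrm{pol}_{\mathbf{a}+\mathbf{1}}(J)$ be the ideal of $\tilde S$ generated by $\prod_k x_{k,1}x_{k,2}\cdots x_{k,b_k}$ and $\mathrm{pol}^{\mathbf{a}+\mathbf{1}}(J)$ the ideal generated by $\prod_k x_{k,a_k+1}x_{k,a_k}\cdots x_{k,a_k-b_k+2}$, over the minimal generators $x^{\mathbf{b}}$ of $J$. The Bier–Murai ideal is $$\mathrm{BM}_{\mathbf{a}}(I)=\mathrm{pol}_{\mathbf{a}+\mathbf{1}}(I)+\mathrm{pol}^{\mathbf{a}+\mathbf{1}}(I^{\vee\mathbf{a}})+\Big(\prod_{m=1}^{a_l+1}x_{l,m}\ \Big|\ l=1,\dots,n\Big)\subset\tilde S.$$ For a squarefree monomial ideal $J$ of a polynomial ring $T$ and a variable $y$ of $T$, the inflation $\mathrm{Infl}_y(J)\subset T[y']$ ($y'$ a new variable) is the ideal obtained by replacing $y$ by $y\cdot y'$ in each minimal generator of $J$; $\mathrm{Infl}_{(i,j)}$ denotes inflation at $x_{i,j}$. *)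

From HB Require Import structures.
From mathcomp Require Import all_boot all_order all_algebra.
From mathcomp Require Import mpoly.

Set Implicit Arguments.
Unset Strict Implicit.
Unset Printing Implicit Defensive.

Import GRing.Theory.

Definition expv (n : nat) := {ffun 'I_n -> nat}.

Definition lev n (b c : expv n) : bool := [forall k, b k <= c k].

(* Minimal elements of a finite generating list w.r.t. a divisibility relation:
   these are the minimal generators of the monomial ideal generated by the list. *)
Definition minimal_of (T : eqType) (r : rel T) (G : seq T) : seq T :=
  [seq g <- undup G | ~~ has (fun h => (h != g) && r h g) G].

Definition mingens n (C : seq (expv n)) := minimal_of (@lev n) C.

(* x^b lies in the monomial ideal generated by the monomials x^c, c in C *)
Definition in_mono n (C : seq (expv n)) (b : expv n) : bool :=
  has (fun c => lev c b) C.

Definition box n (a : expv n) : seq (expv n) :=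
  [seq b <- [seq [ffun k => (f k : nat)] | f : {ffun 'I_n -> 'I_(\max_(k < n) a k).+1}]
     | lev b a].

Definition subv n (a b : expv n) : expv n := [ffun k => a k - b k].

(* generators of the Alexander dual I^{\vee a} *)
Definition dual_gens n (a : expv n) (C : seq (expv n)) : seq (expv n) :=
  [seq b <- box a | ~~ in_mono C (subv a b)].

Definition addE n (a : expv n) (i : 'I_n) : expv n := [ffun k => a k + (k == i)].

Definition tau n (i : 'I_n) (m : nat) (b : expv n) : expv n :=
  [ffun k => if (k == i) && (m <= b k) then b k + 1 else b k].

Definition tri n (i : 'I_n) (j : nat) (C : seq (expv n)) : seq (expv n) :=
  [seq tau i j c | c <- mingens C].

(* Variables x_{k,m}, 1 <= m <= a_k + 1, of \tilde S; the element
   Tagged k (m' : 'I_(a k).+1) stands for x_{k, m'+1}. *)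
Definition V n (a : expv n) : finType := {k : 'I_n & 'I_(a k).+1}.

Definition var n (a : expv n) (k : 'I_n) (m : nat) : V a :=
  Tagged (fun k => 'I_(a k).+1) (@inord (a k) m.-1).

(* squarefree monomials as sets of variables *)
Definition polL n (a : expv n) (b : expv n) : {set V a} :=
  [set v : V a | (tagged v : nat).+1 <= b (tag v)].
Definition polU n (a : expv n) (b : expv n) : {set V a} :=
  [set v : V a | a (tag v) + 2 - b (tag v) <= (tagged v : nat).+1].
Definition column n (a : expv n) (l : 'I_n) : {set V a} :=
  [set v : V a | tag v == l].

Definition BM n (a : expv n) (C : seq (expv n)) : seq {set V a} :=
  [seq polL a b | b <- mingens C]
  ++ [seq polU a b | b <- mingens (dual_gens a C)]
  ++ [seq column a l | l <- enum 'I_n].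

Definition mingens_set (T : finType) (G : seq {set T}) : seq {set T} :=
  minimal_of (fun A B : {set T} => A \subset B) G.

(* Inflation at variable y; the new variable y' is None. *)
Definition infl (T : finType) (y : T) (G : seq {set T}) : seq {set option T} :=
  [seq (if y \in A then None |: (Some @: A) else Some @: A) | A : {set T} <- mingens_set G].

(* The polynomial ring over the variables W is {mpoly R[#|W|]},
   variable w being 'X_(enum_rank w). *)
Definition monoP (R : nzRingType) (W : finType) (A : {set W}) : {mpoly R[#|W|]} :=
  (\prod_(w in A) 'X_(enum_rank w))%R.

Definition in_ideal (R : nzRingType) (N : nat) (G : seq {mpoly R[N]}) (p : {mpoly R[N]}) : Prop :=
  exists c : seq {mpoly R[N]}, (p = \sum_(l < size G) nth 0 c l * nth 0 G l)%R.

Definition ideal_eq (R : nzRingType) (N : nat) (G1 G2 : seq {mpoly R[N]}) : Prop :=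
  forall p, in_ideal G1 p <-> in_ideal G2 p.

From mathcomp Require Import all_boot all_order all_algebra.
From mathcomp Require Import mpoly.
From mathcomp Require Import zify.

Set Implicit Arguments.
Unset Strict Implicit.
Unset Printing Implicit Defensive.

Import GRing.Theory.

(* Identify the variables by [var_shift]: in column i it sends x_{i,j+1} to the
   inflation variable and x_{i,m} to x_{i,m-1} for m > j+1.  Under it the lower
   polarization of tau_{i,j}(c) is the inflation at x_{i,j} of the lower
   polarization of c, and columns go to inflated columns.  The dual generators of
   I^{<|<i,j>} (for a+e_i) and of I (for a) are exchanged, up to divisibility, by
   b |-> a - untau(a+e_i - b) and b |-> a+e_i - tau_{i,j-1}(a - b), and these maps
   carry upper polarizations into each other.  Since two squarefree monomial
   ideals coincide once every generator of each is divisible by a generator of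
   the other, this suffices. *)

Section MinimalOf.
Variables (T : eqType) (r : rel T) (mu : T -> nat).
Hypothesis r_refl : reflexive r.
Hypothesis r_trans : transitive r.
Hypothesis r_mu : forall x y, x != y -> r x y -> mu x < mu y.

Lemma minimal_of_mem G g : g \in minimal_of r G -> g \in G.
Proof. by rewrite mem_filter mem_undup => /andP[]. Qed.

Lemma minimal_of_below G g : g \in G -> exists2 h, h \in minimal_of r G & r h g.
Proof.
have [N] := ubnP (mu g); elim: N g => [//|N IH] g ltgN gG.
have [/hasP[h hG /andP[hg rhg]]|nh] := boolP (has (fun h => (h != g) && r h g) G).
  have [h' h'm rh'h] := IH h (leq_trans (r_mu hg rhg) ltgN) hG.
  by exists h' => //; apply: r_trans rhg.
by exists g => //; rewrite mem_filter mem_undup gG andbT.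
Qed.

End MinimalOf.

Lemma levP n (b c : expv n) : reflect (forall k, b k <= c k) (lev b c).
Proof. exact: forallP. Qed.

Lemma lev_refl n : reflexive (@lev n).
Proof. by move=> b; apply/levP. Qed.

Lemma lev_trans n : transitive (@lev n).
Proof. by move=> c b d /levP bc /levP cd; apply/levP => k; apply: leq_trans (bc k) (cd k). Qed.

Lemma lev_sum_lt n (b c : expv n) : b != c -> lev b c -> \sum_k b k < \sum_k c k.
Proof.
move=> nbc /levP bc.
have [k bck] : exists k, b k < c k.
  apply/existsP; apply: contraR nbc; rewrite negb_exists => /forallP bk.
  by apply/eqP/ffunP => k; apply/eqP; rewrite eqn_leq bc leqNgt bk.
rewrite [X in _ < X](bigD1 k) //= [X in X < _](bigD1 k) //= -addSn leq_add //.
exact: leq_sum.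
Qed.

Lemma subvK n (a b : expv n) : lev b a -> subv a (subv a b) = b.
Proof. by move=> /levP ba; apply/ffunP => k; have := ba k; rewrite !ffunE; apply: subKn. Qed.

Lemma subv_lev n (a b : expv n) : lev (subv a b) a.
Proof. by apply/levP => k; rewrite ffunE leq_subr. Qed.

Lemma mingens_mem n (C : seq (expv n)) c : c \in mingens C -> c \in C.
Proof. exact: minimal_of_mem. Qed.

Lemma mingens_below n (C : seq (expv n)) c : c \in C -> exists2 h, h \in mingens C & lev h c.
Proof. exact: (minimal_of_below (@lev_refl n) (@lev_trans n) (@lev_sum_lt n)). Qed.

Lemma mingens_set_mem (T : finType) (G : seq {set T}) A : A \in mingens_set G -> A \in G.
Proof. exact: minimal_of_mem. Qed.

Lemma mingens_set_below (T : finType) (G : seq {set T}) A :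
  A \in G -> exists2 B, B \in mingens_set G & B \subset A.
Proof.
apply: (@minimal_of_below _ (fun A B : {set T} => A \subset B) (fun A => #|A|)) => //.
- by move=> B C D; apply: subset_trans.
- by move=> B C nBC sBC; apply: proper_card; rewrite properEneq nBC.
Qed.

Lemma mem_box n (a b : expv n) : (b \in box a) = lev b a.
Proof.
rewrite /box mem_filter andb_idr // => /levP ba.
apply/imageP; exists [ffun k => inord (b k) : 'I_(\max_(k < n) a k).+1] => //.
apply/ffunP => k; rewrite !ffunE inordK // ltnS (leq_trans (ba k)) //.
exact: leq_bigmax.
Qed.

Lemma mem_dual_gens n (a : expv n) C b :
  (b \in dual_gens a C) = ~~ in_mono C (subv a b) && lev b a.
Proof. by rewrite /dual_gens mem_filter mem_box. Qed.

(* Splits on conditionals innermost first, so that each test is a plain boolean. *)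
Ltac case_ifs := repeat match goal with |- context[if ?b then _ else _] =>
  lazymatch b with context[if _ then _ else _] => fail | _ => case: (boolP b) => ? end end.

Ltac coordinatewise k i :=
  rewrite ?ffunE; case: (eqVneq k i) => [->|_]; rewrite ?eqxx /=; case_ifs; lia.

Definition untau n (i : 'I_n) (m : nat) (b : expv n) : expv n :=
  [ffun k => if (k == i) && (m <= b k) then b k - 1 else b k].

Section TauUntau.
Variables (n : nat) (i : 'I_n).
Implicit Types (b c : expv n) (m : nat).

Lemma tau_mono m b c : lev b c -> lev (tau i m b) (tau i m c).
Proof. by move=> /levP bc; apply/levP => k; have := bc k; coordinatewise k i. Qed.

Lemma untau_mono m b c : lev b c -> lev (untau i m b) (untau i m c).
Proof. by move=> /levP bc; apply/levP => k; have := bc k; coordinatewise k i. Qed.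

Lemma untauK m : cancel (tau i m) (untau i m).
Proof. by move=> c; apply/ffunP => k; coordinatewise k i. Qed.

Lemma untau_tau_pred m b : 0 < m -> untau i m (tau i m.-1 b) = b.
Proof. by move=> m_gt0; apply/ffunP => k; coordinatewise k i. Qed.

Lemma tau_untau_lev m b : 0 < m -> lev (tau i m (untau i m b)) b.
Proof. by move=> m_gt0; apply/levP => k; coordinatewise k i. Qed.

End TauUntau.

Definition infl_set (T : finType) (y : T) (A : {set T}) : {set option T} :=
  if y \in A then None |: (Some @: A) else Some @: A.

Section Inflation.
Variables (T : finType) (y : T).
Implicit Types (A B : {set T}) (G : seq {set T}).

Lemma infl_set_None A : (None \in infl_set y A) = (y \in A).
Proof. by rewrite /infl_set; case: ifP => yA; rewrite ?inE ?eqxx //; apply/imsetP => -[]. Qed.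

Lemma infl_set_Some A v : (Some v \in infl_set y A) = (v \in A).
Proof.
have SomeA : (Some v \in Some @: A) = (v \in A) by apply: mem_imset => ? ? [].
by rewrite /infl_set; case: ifP => _; rewrite ?inE SomeA.
Qed.

Lemma infl_setS A B : A \subset B -> infl_set y A \subset infl_set y B.
Proof.
by move=> /subsetP AB; apply/subsetP => -[v|]; rewrite ?infl_set_Some ?infl_set_None; apply: AB.
Qed.

Lemma mem_infl G (B : {set option T}) :
  B \in infl y G -> exists2 A, A \in mingens_set G & B = infl_set y A.
Proof. by move/mapP. Qed.

Lemma infl_set_mem_infl G A : A \in mingens_set G -> infl_set y A \in infl y G.
Proof. exact: (map_f (infl_set y)). Qed.

End Inflation.

Lemma polLS n (a b c : expv n) : lev b c -> polL a b \subset polL a c.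
Proof. by move=> /levP bc; apply/subsetP => v; rewrite !inE => /leq_trans; apply. Qed.

Lemma polUS n (a b c : expv n) : lev b c -> polU a b \subset polU a c.
Proof. by move=> /levP bc; apply/subsetP => v; rewrite !inE; apply/leq_trans/leq_sub2l. Qed.

(* The beta-redexes expose the column predicate, so that [var_shift_Some] and
   its companions can infer it. *)
Section ColumnwiseDescription.
Variables (n : nat) (a b : expv n).

Lemma polL_tagged : forall w, (w \in polL a b) = (fun k m => m < b k) (tag w) (tagged w).
Proof. by move=> w; rewrite inE. Qed.

Lemma polU_tagged :
  forall w, (w \in polU a b) = (fun k m => a k + 2 - b k <= m.+1) (tag w) (tagged w).
Proof. by move=> w; rewrite inE. Qed.

Lemma column_tagged l :
  forall w, (w \in column a l) = (fun k (_ : nat) => k == l) (tag w) (tagged w).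
Proof. by move=> w; rewrite inE. Qed.

End ColumnwiseDescription.

Section VarShift.
Variables (n : nat) (a : expv n) (i : 'I_n) (j : nat).
Hypotheses (j_gt0 : 0 < j) (j_le : j <= a i + 1).
Local Notation a' := (addE a i).
Local Notation y := (var a i j).

(* Column i of the larger ring loses its variable x_{i,j+1}, which becomes the
   inflation variable [None]; the variables above it move down by one. *)
Definition var_shift (v : V a') : option (V a) :=
  let k := tag v in let m := (tagged v : nat) in
  if (k == i) && (m == j) then None
  else Some (Tagged (fun k => 'I_(a k).+1)
               (@inord (a k) (if (k == i) && (j < m) then m.-1 else m))).

Definition var_unshift (z : option (V a)) : V a' :=
  match z with
  | None => Tagged (fun k => 'I_(a' k).+1) (@inord (a' i) j)
  | Some v => Tagged (fun k => 'I_(a' k).+1)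
     (@inord (a' (tag v)) (if (tag v == i) && (j <= tagged v) then (tagged v).+1 else tagged v))
  end.

Lemma addE_ltn k x : x <= a k + (k == i) -> x < (a' k).+1.
Proof. by rewrite ffunE ltnS. Qed.

Lemma addE_tagged (v : V a') : tagged v <= a (tag v) + (tag v == i).
Proof. by rewrite -ltnS -(ffunE (fun k => a k + (k == i))). Qed.

Lemma var_shiftK : cancel var_shift var_unshift.
Proof.
case=> k m; have /= := addE_tagged (Tagged (fun k => 'I_(a' k).+1) m).
rewrite /var_shift /=; case: (eqVneq k i) => [ek|k_neq] /= m_le.
  subst k; case: (eqVneq (m : nat) j) => [m_j|m_neq] /=.
    by congr existT; apply: val_inj; rewrite /= inordK //; apply: addE_ltn; rewrite eqxx; lia.
  have m'_lt : (if j < m then m.-1 else m) < (a i).+1 by case: ifP; lia.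
  congr existT; apply: val_inj; rewrite /= (inordK m'_lt) inordK; last first.
    by apply: addE_ltn; rewrite eqxx; case_ifs; lia.
  by rewrite eqxx; case_ifs; lia.
rewrite addn0 in m_le; congr existT; apply: val_inj.
rewrite /= inordK // (negbTE k_neq) inordK //.
by apply: addE_ltn; rewrite (negbTE k_neq); lia.
Qed.

Lemma var_unshiftK : cancel var_unshift var_shift.
Proof.
case=> [[k m]|]; rewrite /var_shift /=; last first.
  by rewrite inordK ?eqxx //; apply: addE_ltn; rewrite eqxx; lia.
have /= m_le := ltn_ord m; rewrite ltnS in m_le.
case: (eqVneq k i) => [ek|_] /=.
  subst k; rewrite inordK; last by apply: addE_ltn; rewrite eqxx; case_ifs; lia.
  case_ifs; try lia; congr Some; congr existT; apply: val_inj; rewrite /= inordK //; lia.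
rewrite inordK; last by apply: addE_ltn; lia.
by congr Some; congr existT; apply: val_inj; rewrite /= inordK.
Qed.

Lemma var_shift_bij : bijective var_shift.
Proof. exact: Bijective var_shiftK var_unshiftK. Qed.

Lemma mem_var_shift (X : {set V a'}) z : (z \in var_shift @: X) = (var_unshift z \in X).
Proof.
apply/imsetP/idP => [[x xX ->]|Xz]; first by rewrite var_shiftK.
by exists (var_unshift z); rewrite ?var_unshiftK.
Qed.

Lemma var_shift_Some (P : 'I_n -> nat -> bool) (X : {set V a'}) :
  (forall w, (w \in X) = P (tag w) (tagged w)) ->
  forall v, (Some v \in var_shift @: X) =
    P (tag v) (if (tag v == i) && (j <= tagged v) then (tagged v).+1 else tagged v).
Proof.
move=> X_P v; rewrite mem_var_shift X_P /= inordK //; apply: addE_ltn.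
by case: v => k [m m_lt] /=; move: m_lt; case: eqP => /=; case_ifs; lia.
Qed.

Lemma var_shift_None (P : 'I_n -> nat -> bool) (X : {set V a'}) :
  (forall w, (w \in X) = P (tag w) (tagged w)) -> (None \in var_shift @: X) = P i j.
Proof. by move=> X_P; rewrite mem_var_shift X_P /= inordK //; apply: addE_ltn; rewrite eqxx; lia. Qed.

Lemma infl_var_None (P : 'I_n -> nat -> bool) (Y : {set V a}) :
  (forall w, (w \in Y) = P (tag w) (tagged w)) -> (None \in infl_set y Y) = P i j.-1.
Proof. by move=> Y_P; rewrite infl_set_None Y_P /= inordK //; lia. Qed.

Lemma var_shift_polL_tau c : lev c a -> var_shift @: polL a' (tau i j c) = infl_set y (polL a c).
Proof.
move=> /levP c_le; apply/setP => -[v|].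
  rewrite infl_set_Some inE (var_shift_Some (polL_tagged _)).
  by case: v => k [m _] /=; have := c_le k; coordinatewise k i.
rewrite (var_shift_None (polL_tagged _)) (infl_var_None (polL_tagged _)) /=.
by have := c_le i; rewrite ffunE eqxx /=; case_ifs; lia.
Qed.

Lemma var_shift_column l : var_shift @: column a' l = infl_set y (column a l).
Proof.
apply/setP => -[v|]; last by rewrite (var_shift_None (column_tagged _)) (infl_var_None (column_tagged _)).
by rewrite infl_set_Some inE (var_shift_Some (column_tagged _)).
Qed.

Lemma infl_polU_untau b : lev b a' ->
  infl_set y (polU a (subv a (untau i j (subv a' b)))) \subset var_shift @: polU a' b.
Proof.
move=> /levP b_le; apply/subsetP => -[v|].
  rewrite infl_set_Some inE (var_shift_Some (polU_tagged _)).
  by case: v => k [m m_lt] /=; move: m_lt; have := b_le k; coordinatewise k i.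
rewrite (var_shift_None (polU_tagged _)) (infl_var_None (polU_tagged _)) /=.
by have := b_le i; rewrite !ffunE eqxx /=; case_ifs; lia.
Qed.

Lemma var_shift_polU_tau b : lev b a ->
  var_shift @: polU a' (subv a' (tau i j.-1 (subv a b))) \subset infl_set y (polU a b).
Proof.
move=> /levP b_le; apply/subsetP => -[v|].
  rewrite infl_set_Some inE (var_shift_Some (polU_tagged _)).
  by case: v => k [m m_lt] /=; move: m_lt; have := b_le k; coordinatewise k i.
rewrite (var_shift_None (polU_tagged _)) (infl_var_None (polU_tagged _)) /=.
by have := b_le i; rewrite !ffunE eqxx /=; case_ifs; lia.
Qed.

End VarShift.

Section DualGens.
Variables (n : nat) (a : expv n) (i : 'I_n) (j : nat) (C : seq (expv n)).
Hypotheses (j_gt0 : 0 < j) (j_le : j <= a i + 1).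
Local Notation a' := (addE a i).

Lemma dual_gens_tri_untau b : b \in dual_gens a' (tri i j C) ->
  subv a (untau i j (subv a' b)) \in dual_gens a C.
Proof.
rewrite !mem_dual_gens subv_lev andbT => /andP[b_out _].
have untau_le : lev (untau i j (subv a' b)) a by apply/levP => k; coordinatewise k i.
rewrite subvK //; apply: contra b_out => /hasP[c cC c_le].
have [c0 c0_min c0_le] := mingens_below cC.
apply/hasP; exists (tau i j c0); first exact: map_f.
apply: lev_trans (tau_untau_lev _ _ j_gt0); apply: tau_mono; exact: lev_trans c0_le c_le.
Qed.

Lemma dual_gens_tau b : b \in dual_gens a C ->
  subv a' (tau i j.-1 (subv a b)) \in dual_gens a' (tri i j C).
Proof.
rewrite !mem_dual_gens subv_lev andbT => /andP[b_out _].
have tau_le : lev (tau i j.-1 (subv a b)) a' by apply/levP => k; coordinatewise k i.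
rewrite subvK //; apply: contra b_out => /hasP[_ /mapP[c c_min ->] c_le].
apply/hasP; exists c; first exact: mingens_mem.
by rewrite -(untauK i j c) -(untau_tau_pred i (subv a b) j_gt0); apply: untau_mono.
Qed.

End DualGens.

Section MonomialIdeals.
Variables (R : fieldType) (N : nat).
Local Open Scope ring_scope.
Implicit Types (G : seq {mpoly R[N]}) (p q : {mpoly R[N]}).

Lemma in_ideal0 G : in_ideal G 0.
Proof. by exists [::]; rewrite big1 // => l _; rewrite nth_nil mul0r. Qed.

Lemma in_idealD G p q : in_ideal G p -> in_ideal G q -> in_ideal G (p + q).
Proof.
move=> [c ->] [d ->]; exists (mkseq (fun l => nth 0 c l + nth 0 d l) (size G)).
by rewrite -big_split /=; apply: eq_bigr => l _; rewrite nth_mkseq // mulrDl.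
Qed.

Lemma in_idealMl G r p : in_ideal G p -> in_ideal G (r * p).
Proof.
move=> [c ->]; exists (mkseq (fun l => r * nth 0 c l) (size G)).
by rewrite mulr_sumr; apply: eq_bigr => l _; rewrite nth_mkseq // mulrA.
Qed.

Lemma in_ideal_gen G g : g \in G -> in_ideal G g.
Proof.
move=> gG; exists (mkseq (fun l => (l == index g G)%:R) (size G)).
have g_idx : (index g G < size G)%N by rewrite index_mem.
rewrite (bigD1 (Ordinal g_idx)) //= big1 ?addr0; first by rewrite nth_mkseq // eqxx mul1r nth_index.
move=> l l_neq; rewrite nth_mkseq //; case: eqP => [l_idx|_]; last by rewrite mul0r.
by case/eqP: l_neq; apply: val_inj.
Qed.

Lemma in_ideal_trans G1 G2 :
  (forall g, g \in G1 -> in_ideal G2 g) -> forall p, in_ideal G1 p -> in_ideal G2 p.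
Proof.
move=> G12 p [c ->]; apply: (big_ind (in_ideal G2)).
- exact: in_ideal0.
- exact: in_idealD.
- by move=> l _; apply/in_idealMl/G12/mem_nth.
Qed.

End MonomialIdeals.

Section SquarefreeIdeals.
Variables (R : fieldType) (W : finType).
Local Open Scope ring_scope.
Implicit Types (X Y : {set W}) (F : seq {set W}).

Lemma monoP_subset X Y :
  Y \subset X -> monoP R X = monoP R (X :\: Y) * monoP R Y.
Proof. by move=> YX; rewrite /monoP (big_setID Y) /= mulrC (setIidPr YX). Qed.

Lemma monoP_in_ideal F X :
  (exists2 Y, Y \in F & Y \subset X) -> in_ideal [seq monoP R Y | Y <- F] (monoP R X).
Proof.
move=> [Y YF YX]; rewrite (monoP_subset YX).
exact/in_idealMl/in_ideal_gen/map_f.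
Qed.

Lemma monoP_ideal_eq F1 F2 :
  (forall X, X \in F1 -> exists2 Y, Y \in F2 & Y \subset X) ->
  (forall Y, Y \in F2 -> exists2 X, X \in F1 & X \subset Y) ->
  ideal_eq [seq monoP R X | X <- F1] [seq monoP R Y | Y <- F2].
Proof.
move=> F12 F21 p; split; apply: in_ideal_trans => _ /mapP[X XF ->]; apply: monoP_in_ideal.
- exact: F12.
- exact: F21.
Qed.

End SquarefreeIdeals.

Lemma mem_BM n (a : expv n) C A : A \in BM a C ->
  [\/ exists2 b, b \in mingens C & A = polL a b,
      exists2 b, b \in mingens (dual_gens a C) & A = polU a b |
      exists l, A = column a l].
Proof.
rewrite /BM !mem_cat => /orP[/mapP[b b_min ->]|/orP[/mapP[b b_min ->]|/mapP[l _ ->]]].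
- by apply: Or31; exists b.
- by apply: Or32; exists b.
- by apply: Or33; exists l.
Qed.

Section BMShift.
Variables (n : nat) (a : expv n) (C : seq (expv n)) (i : 'I_n) (j : nat).
Hypothesis C_le : forall c, c \in mingens C -> lev c a.
Hypotheses (j_gt0 : 0 < j) (j_le : j <= a i + 1).
Local Notation a' := (addE a i).
Local Notation y := (var a i j).
Local Notation shift := (@var_shift n a i j).

Lemma var_shift_BM_above_infl A : A \in BM a' (tri i j C) ->
  exists2 B, B \in infl y (BM a C) & B \subset shift @: A.
Proof.
move=> A_BM.
suff [A0 A0_BM A0_sub] : exists2 A0, A0 \in BM a C & infl_set y A0 \subset shift @: A.
  have [A1 A1_min A1_sub] := mingens_set_below A0_BM.
  exists (infl_set y A1); first exact: infl_set_mem_infl.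
  exact: subset_trans (infl_setS _ A1_sub) A0_sub.
case/mem_BM: A_BM => [[_ /mingens_mem/mapP[c c_min ->] ->]|[b b_min ->]|[l ->]].
- exists (polL a c); first by rewrite /BM mem_cat map_f.
  by rewrite (var_shift_polL_tau j_gt0 j_le (C_le c_min)).
- have b_dual := mingens_mem b_min.
  have b_le : lev b a' by move: b_dual; rewrite mem_dual_gens => /andP[].
  have [b0 b0_min b0_le] := mingens_below (dual_gens_tri_untau j_gt0 j_le b_dual).
  exists (polU a b0); first by rewrite /BM !mem_cat map_f ?orbT.
  exact: subset_trans (infl_setS _ (polUS _ b0_le)) (infl_polU_untau j_gt0 j_le b_le).
- exists (column a l); first by rewrite /BM !mem_cat map_f ?orbT ?mem_enum.
  by rewrite (var_shift_column j_gt0 j_le).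
Qed.

Lemma infl_BM_above_var_shift B : B \in infl y (BM a C) ->
  exists2 A, A \in BM a' (tri i j C) & shift @: A \subset B.
Proof.
move=> /mem_infl[A0 A0_min ->].
case/mem_BM: (mingens_set_mem A0_min) => [[c c_min ->]|[b b_min ->]|[l ->]].
- have [c0 c0_min c0_le] := mingens_below (map_f (tau i j) c_min : tau i j c \in tri i j C).
  exists (polL a' c0); first by rewrite /BM mem_cat map_f.
  by rewrite -(var_shift_polL_tau j_gt0 j_le (C_le c_min)); apply/imsetS/polLS.
- have b_dual := mingens_mem b_min.
  have b_le : lev b a by move: b_dual; rewrite mem_dual_gens => /andP[].
  have [b0 b0_min b0_le] := mingens_below (dual_gens_tau j_gt0 j_le b_dual).
  exists (polU a' b0); first by rewrite /BM !mem_cat map_f ?orbT.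
  exact: subset_trans (imsetS _ (polUS _ b0_le)) (var_shift_polU_tau j_gt0 j_le b_le).
- exists (column a' l); first by rewrite /BM !mem_cat map_f ?orbT ?mem_enum.
  by rewrite (var_shift_column j_gt0 j_le).
Qed.

End BMShift.

Theorem proposition5p3 (R : fieldType) (n : nat) (a : expv n) (C : seq (expv n)) :
  (forall k : 'I_n, 0 < a k) ->
  (forall c, c \in mingens C -> lev c a) ->
  forall (i : 'I_n) (j : nat), 1 <= j <= a i + 1 ->
  exists sigma : V (addE a i) -> option (V a),
    bijective sigma /\
    ideal_eq
      [seq monoP R (sigma @: A) | A : {set V (addE a i)} <- BM (addE a i) (tri i j C)]
      [seq monoP R A | A : {set option (V a)} <- infl (var a i j) (BM a C)].
Proof.
move=> _ C_le i j /andP[j_gt0 j_le].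
exists (var_shift j); split; first exact: var_shift_bij.
set BM' := BM (addE a i) (tri i j C).
have -> : [seq monoP R (var_shift j @: A) | A : {set _} <- BM'] =
          [seq monoP R X | X <- [seq var_shift j @: A | A : {set _} <- BM']] by rewrite -map_comp.
apply: monoP_ideal_eq => [_ /mapP[A A_BM ->]|B B_infl].
  exact: var_shift_BM_above_infl.
have [A A_BM A_sub] := infl_BM_above_var_shift C_le j_gt0 j_le B_infl.
by exists (var_shift j @: A); first exact: map_f.
Qed.
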